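(* Let $C$ be a closed, regular cone with nonempty interior in a real Banach space. Let $f:\operatorname{int}C\to\operatorname{int}C$ be order-preserving and subhomogeneous. Then the limit $f_\infty(x)=\lim_{t\to\infty}t^{-1}f(tx)$ exists for every $x\in\operatorname{int}C$, the map $f_\infty:\operatorname{int}C\to C$ is order-preserving and homogeneous, and $r(f)=r(f_\infty)$.
   Context: A closed cone $C$ (closed convex, $\lambda C\subseteq C$ for $\lambda\ge0$, $C\cap(-C)=\{0\}$) induces the order $x\le y$ iff $y-x\in C$; $C$ is regular if every decreasing sequence in $C$ converges. $f$ is order-preserving if $x\le y\Rightarrow f(x)\le f(y)$; homogeneous if $f(tx)=tf(x)$ for all $t>0$; subhomogeneous if $f(tx)\le tf(x)$ for all $t\ge1$. For $g:\operatorname{int}C\to C$, $r(g)=\inf_{x\in\operatorname{int}C}M(g(x)/x)$ where $M(x/y)=\inf\{\beta>0:x\le\beta y\}$. *)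

From HB Require Import structures.
From mathcomp Require Import all_boot all_order all_algebra.
From mathcomp Require Import all_classical all_reals all_analysis.
Set Implicit Arguments. Unset Strict Implicit. Unset Printing Implicit Defensive.
Import Order.TTheory GRing.Theory Num.Theory.
Import numFieldNormedType.Exports.
Local Open Scope classical_set_scope.
Local Open Scope ring_scope.

Section Cones.
Context {R : realType} {V : normedModType R}.

Definition is_closed_cone (C : set V) : Prop :=
  [/\ closed C,
      (forall x y (t : R), C x -> C y -> 0 <= t <= 1 -> C (t *: x + (1 - t) *: y)),
      (forall x (l : R), C x -> 0 <= l -> C (l *: x)) &
      (forall x, C x -> C (- x) -> x = 0)].

Definition cle (C : set V) (x y : V) : Prop := C (y - x).

Definition regular_cone (C : set V) : Prop :=
  forall u : nat -> V, (forall n, C (u n)) ->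
    (forall n, cle C (u n.+1) (u n)) -> exists l : V, u @ \oo --> l.

Definition order_preserving_on (C : set V) (f : V -> V) : Prop :=
  forall x y, interior C x -> interior C y -> cle C x y -> cle C (f x) (f y).

Definition homogeneous_on (C : set V) (f : V -> V) : Prop :=
  forall x (t : R), interior C x -> 0 < t -> f (t *: x) = t *: f x.

Definition subhomogeneous_on (C : set V) (f : V -> V) : Prop :=
  forall x (t : R), interior C x -> 1 <= t -> cle C (f (t *: x)) (t *: f x).

Definition Mcone (C : set V) (x y : V) : R :=
  inf [set b : R | 0 < b /\ cle C x (b *: y)].

Definition rcone (C : set V) (g : V -> V) : R :=
  inf [set Mcone C (g x) x | x in interior C].

End Cones.

From HB Require Import structures.
From mathcomp Require Import all_boot all_order all_algebra.
From mathcomp Require Import all_classical all_reals all_analysis.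
From mathcomp Require Import lra.
Import Order.TTheory GRing.Theory Num.Theory.
Import numFieldNormedType.Exports.
Local Open Scope classical_set_scope.
Local Open Scope ring_scope.
Set Implicit Arguments. Unset Strict Implicit.

(* For x in int C, subhomogeneity makes t |-> t^-1 f(t x) nonincreasing in the
   cone order, with values in C, so by regularity it converges along t = n + 1.
   If it did not converge at +oo, an increasing sequence of times staying away
   from that limit would, again by regularity, produce a second limit; but any
   two limits along sequences tending to +oo coincide, since each is a lower
   bound of the whole function and C is pointed.  Order preservation and
   homogeneity pass to the limit because C is closed.  Finally f_oo <= f gives
   r(f_oo) <= r(f); conversely f_oo(x) <= b x forces f(t x) <= (b + e) t x for
   large t, whence r(f) <= r(f_oo). *)

Section ClosedCone.
Context {R : realType} {V : normedModType R} (C : set V).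
Hypothesis coneC : is_closed_cone C.

Lemma coneZ (l : R) x : 0 <= l -> C x -> C (l *: x).
Proof. by case: coneC => _ _ homC _ l0 Cx; apply: homC. Qed.

Lemma coneD x y : C x -> C y -> C (x + y).
Proof.
case: coneC => _ convC _ _ Cx Cy.
have half01 : 0 <= (2^-1 : R) <= 1 by apply/andP; split; lra.
have := convC _ _ _ Cx Cy half01; rewrite (_ : 1 - 2^-1 = 2^-1); last by lra.
rewrite -scalerDr => /(coneZ (ler0n R 2)).
by rewrite scalerA divff ?scale1r ?pnatr_eq0.
Qed.

Lemma cle_trans x y z : cle C x y -> cle C y z -> cle C x z.
Proof. by rewrite /cle => Cyx Czy; have := coneD Czy Cyx; rewrite addrA subrK. Qed.

Lemma cle_anti x y : cle C x y -> cle C y x -> x = y.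
Proof.
case: coneC => _ _ _ pointedC Cyx Cxy; apply/eqP; rewrite eq_sym -subr_eq0.
by apply/eqP/pointedC; rewrite // opprB.
Qed.

Lemma cleZ (t : R) x y : 0 <= t -> cle C x y -> cle C (t *: x) (t *: y).
Proof. by rewrite /cle -scalerBr; apply: coneZ. Qed.

Lemma cle_cvg {T} (F : set_system T) {FF : ProperFilter F} (u w : T -> V) l m :
  (\forall t \near F, cle C (u t) (w t)) -> u @ F --> l -> w @ F --> m ->
  cle C l m.
Proof.
case: coneC => closedC _ _ _ uw ul wm.
exact: (closed_cvg _ closedC uw _ (cvgB wm ul)).
Qed.

Lemma interiorZ (t : R) x : 0 < t -> interior C x -> interior C (t *: x).
Proof.
move=> t0 /nbhs_normP[r r0 ballC]; apply/nbhs_normP.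
exists (t * r); first exact: mulr_gt0.
move=> y /= xy; rewrite -(scalerKV (lt0r_neq0 t0) y).
apply: coneZ (ltW t0) _; apply: ballC => /=.
rewrite -[x](scalerK (lt0r_neq0 t0)) -scalerBr normrZ gtr0_norm ?invr_gt0 //.
by rewrite ltr_pdivrMl.
Qed.

Lemma interior_absorbing (e : R) x : 0 < e -> interior C x ->
  \forall v \near 0, cle C v (e *: x).
Proof.
move=> e0 /nbhs_normP[r r0 ballC]; apply/nbhs_normP.
exists (r * e); first exact: mulr_gt0.
move=> v /=; rewrite sub0r normrN /cle => ve.
rewrite -[v](scalerKV (lt0r_neq0 e0)) -scalerBr; apply: coneZ (ltW e0) _.
apply: ballC => /=; rewrite opprB addrC subrK normrZ gtr0_norm ?invr_gt0 //.
by rewrite ltr_pdivrMl // mulrC.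
Qed.

Lemma interior_dominates x c :
  interior C x -> exists2 b : R, 0 < b & cle C c (b *: x).
Proof.
move=> /(interior_absorbing ltr01)/nbhs_normP[d d0 smallC].
pose s := d / (`|c| + 1).
have s0 : 0 < s by rewrite divr_gt0 // ltr_wpDl.
exists s^-1; first by rewrite invr_gt0.
rewrite -[c](scalerK (lt0r_neq0 s0)).
apply: cleZ; first by rewrite invr_ge0 ltW.
rewrite -[x]scale1r; apply: smallC => /=; rewrite sub0r normrN normrZ gtr0_norm //.
by rewrite /s mulrAC ltr_pdivrMr ?ltr_wpDl // ltr_pM2l // ltrDl.
Qed.

End ClosedCone.

Section ConeSpectralRadius.
Context {R : realType} {V : normedModType R} (C : set V).

Lemma Mcone_ge0 a x : 0 <= Mcone C a x.
Proof.
rewrite /Mcone.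
have [[b b_dom]|no_dom] := pselect (exists b, 0 < b /\ cle C a (b *: x)).
  by apply: lb_le_inf; [exists b | move=> c [c0 _]; apply: ltW].
suff -> : [set b : R | 0 < b /\ cle C a (b *: x)] = set0 by rewrite inf0.
by apply/seteqP; split => // b b_dom; apply: no_dom; exists b.
Qed.

Lemma Mcone_le a x b : 0 < b -> cle C a (b *: x) -> Mcone C a x <= b.
Proof. by move=> b0 ab; apply: ge_inf => //; exists 0 => c [c0 _]; apply: ltW. Qed.

Lemma Mcone_ge a x r : (exists2 b, 0 < b & cle C a (b *: x)) ->
  (forall b, 0 < b -> cle C a (b *: x) -> r <= b) -> r <= Mcone C a x.
Proof.
move=> [b b0 ab] r_lb.
by apply: lb_le_inf; [exists b | move=> c [c0 ac]; apply: r_lb].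
Qed.

Lemma rcone_le g x : interior C x -> rcone C g <= Mcone C (g x) x.
Proof.
move=> xC; apply: ge_inf; last by exists x.
by exists 0 => _ [y _ <-]; apply: Mcone_ge0.
Qed.

Lemma rcone_ge g r : interior C !=set0 ->
  (forall x, interior C x -> r <= Mcone C (g x) x) -> r <= rcone C g.
Proof.
move=> [x0 x0C] r_lb; apply: lb_le_inf; first by exists (Mcone C (g x0) x0), x0.
by move=> _ [y yC <-]; apply: r_lb.
Qed.

Lemma le_rcone g h : is_closed_cone C -> interior C !=set0 ->
  (forall x, interior C x -> cle C (g x) (h x)) -> rcone C g <= rcone C h.
Proof.
move=> coneC intC gh; apply: rcone_ge => // x xC.
apply: le_trans (rcone_le g xC) _.
apply: Mcone_ge; first exact: interior_dominates.
by move=> b b0 hb; apply: Mcone_le b0 (cle_trans coneC (gh x xC) hb).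
Qed.

End ConeSpectralRadius.

Lemma not_cvgr_pinfty {R : realType} {V : normedModType R} (h : R -> V) (l : V) :
  ~ h @ +oo --> l ->
  exists2 e : R, 0 < e & exists t : nat -> R,
    [/\ forall k, k%:R < t k, forall k, t k <= t k.+1 &
        forall k, e <= `|l - h (t k)|].
Proof.
move=> hl; have [e e0 far] : exists2 e : R, 0 < e &
    forall M, exists t, M < t /\ e <= `|l - h t|.
  apply: contrapT => nofar; apply: hl; apply/cvgrPdist_lt => e e0.
  apply: contrapT => notnear; apply: nofar; exists e => // M.
  apply: contrapT => none; apply: notnear; exists M; split; first exact: num_real.
  by move=> t Mt; rewrite ltNge; apply/negP => et; apply: none; exists t.
have [next nextP] := choice far.
pose t := fix t k := if k is k.+1 then next (t k + 1) else next 0.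
exists e => //; exists t; split.
- elim=> [|k IH]; first exact: (nextP 0).1.
  by apply: lt_trans (nextP _).1; rewrite -natr1 ltrD2r.
- by move=> k; apply/ltW/(lt_trans _ (nextP _).1); rewrite ltrDl.
- by case=> [|k]; apply: (nextP _).2.
Qed.

Section DecreasingInRegularCone.
Context {R : realType} {V : normedModType R} (C : set V).
Hypotheses (coneC : is_closed_cone C) (regC : regular_cone C).
Variable g : R -> V.
Hypothesis g_ge0 : forall t, 0 < t -> C (g t).
Hypothesis g_decr : forall s t, 0 < s -> s <= t -> cle C (g t) (g s).

Lemma seq_limit_lb (s : nat -> R) (l : V) t :
  s @ \oo --> +oo -> g \o s @ \oo --> l -> 0 < t -> cle C l (g t).
Proof.
move=> /cvgry_gt/(_ t) s_gt gsl t0.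
apply: (cle_cvg coneC _ gsl (cvg_cst (g t))).
by apply: filterS s_gt => n tsn; apply: g_decr (ltW tsn).
Qed.

Lemma seq_limit_unique (s s' : nat -> R) (l l' : V) :
  s @ \oo --> +oo -> s' @ \oo --> +oo ->
  g \o s @ \oo --> l -> g \o s' @ \oo --> l' -> l = l'.
Proof.
suff lb (s1 s2 : nat -> R) (l1 l2 : V) : s1 @ \oo --> +oo -> s2 @ \oo --> +oo ->
    g \o s1 @ \oo --> l1 -> g \o s2 @ \oo --> l2 -> cle C l1 l2.
  move=> s_oo s'_oo gl gl'.
  by apply: (cle_anti coneC); [apply: (lb s s') | apply: (lb s' s)].
move=> s1oo s2oo gl1 gl2; apply: (cle_cvg coneC _ (cvg_cst l1) gl2).
by apply: filterS (cvgry_gt s2oo 0) => n /(seq_limit_lb s1oo gl1).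
Qed.

Lemma decr_seq_cvg (s : nat -> R) : (forall n, 0 < s n) ->
  (forall n, s n <= s n.+1) -> exists l : V, g \o s @ \oo --> l.
Proof. by move=> s0 s_incr; apply: regC => n; [apply: g_ge0 | apply: g_decr]. Qed.

Lemma regular_cone_decr_cvg : exists l : V, g @ +oo --> l.
Proof.
have succ_oo : (n.+1%:R : R) @[n --> \oo] --> +oo.
  by apply: ger_cvgy cvgr_idn; apply: nearW => n; rewrite ler_nat.
have [l gl] : exists l : V, g \o (fun n => n.+1%:R) @ \oo --> l.
  by apply: decr_seq_cvg => n; rewrite ?ltr0Sn ?ler_nat.
exists l; apply: contrapT => /not_cvgr_pinfty[e e0 [t [t_gt t_incr far]]].
have t_oo : t @ \oo --> +oo.
  by apply: ger_cvgy cvgr_idn; apply: nearW => k; apply: ltW.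
have t0 k : 0 < t k by apply: le_lt_trans (t_gt k).
have [l' gl'] := decr_seq_cvg t0 t_incr.
move: far; rewrite (seq_limit_unique succ_oo t_oo gl gl') => far.
have [N _ closeN] := (cvgrPdist_lt _ _).1 gl' e e0.
by have := closeN N (leqnn N); rewrite ltNge far.
Qed.

End DecreasingInRegularCone.

Definition rescale {R : realType} {V : normedModType R} (f : V -> V) x (t : R) :=
  t^-1 *: f (t *: x).

Definition finfty {R : realType} {V : normedModType R} (f : V -> V) x :=
  lim (rescale f x @ +oo).

Section Recession.
Context {R : realType} {V : normedModType R} (C : set V) (f : V -> V).
Hypotheses (coneC : is_closed_cone C) (regC : regular_cone C).
Hypothesis f_int : forall x, interior C x -> interior C (f x).
Hypothesis f_op : order_preserving_on C f.
Hypothesis f_subhom : subhomogeneous_on C f.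

Lemma rescale_ge0 x : interior C x -> forall t, 0 < t -> C (rescale f x t).
Proof.
move=> xC t t0; apply: (coneZ coneC); first by rewrite invr_ge0 ltW.
by apply: interior_subset; apply: f_int; exact: (interiorZ coneC t0 xC).
Qed.

Lemma rescale_decr x : interior C x -> forall s t, 0 < s -> s <= t ->
  cle C (rescale f x t) (rescale f x s).
Proof.
move=> xC s t s0 st; have t0 := lt_le_trans s0 st.
have ts1 : 1 <= t / s by rewrite ler_pdivlMr // mul1r.
have t_inv0 : 0 <= t^-1 by rewrite invr_ge0 ltW.
move: (cleZ coneC t_inv0 (f_subhom (interiorZ coneC s0 xC) ts1)).
by rewrite !scalerA (divfK (lt0r_neq0 s0)) mulrA (mulVf (lt0r_neq0 t0)) mul1r.
Qed.

Lemma rescale_cvg x : interior C x -> rescale f x @ +oo --> finfty f x.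
Proof.
move=> xC; have [l fl] := regular_cone_decr_cvg coneC regC (rescale_ge0 xC)
  (rescale_decr xC).
by rewrite /finfty (cvg_lim _ fl).
Qed.

Lemma finfty_ge0 x : interior C x -> C (finfty f x).
Proof.
move=> xC; rewrite -[finfty f x]subr0.
apply: (cle_cvg coneC _ (cvg_cst 0) (rescale_cvg xC)).
apply: filterS (nbhs_pinfty_gt (num_real 0)) => t t0.
by rewrite /cle subr0; apply: rescale_ge0.
Qed.

Lemma finfty_le x : interior C x -> cle C (finfty f x) (f x).
Proof.
move=> xC; apply: (cle_cvg coneC _ (rescale_cvg xC) (cvg_cst (f x))).
apply: filterS (nbhs_pinfty_ge (num_real 1)) => t t1.
by have := rescale_decr xC ltr01 t1; rewrite /rescale invr1 !scale1r.
Qed.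

Lemma finfty_op : order_preserving_on C (finfty f).
Proof.
move=> x y xC yC xy; apply: (cle_cvg coneC _ (rescale_cvg xC) (rescale_cvg yC)).
apply: filterS (nbhs_pinfty_gt (num_real 0)) => t t0.
apply: (cleZ coneC); first by rewrite invr_ge0 ltW.
by apply: f_op; [exact: interiorZ | exact: interiorZ | exact: cleZ (ltW t0) xy].
Qed.

Lemma finfty_hom : homogeneous_on C (finfty f).
Proof.
move=> x s xC s0.
have ts_oo : (fun t => t * s) @ +oo --> +oo.
  apply/cvgryPge => A; apply: filterS (nbhs_pinfty_ge (num_real (A / s))) => t.
  by rewrite ler_pdivrMr.
have rescaleZ : rescale f (s *: x) = s \*: (rescale f x \o (fun t => t * s)).
  apply/funext => t /=; rewrite /rescale !scalerA invfM mulrCA mulfV ?gt_eqF //.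
  by rewrite mulr1 mulrC.
rewrite {1}/finfty rescaleZ.
by apply: cvg_lim => //; apply: cvgZl_tmp; apply: cvg_comp ts_oo (rescale_cvg xC).
Qed.

Lemma rescale_near_le x e : interior C x -> 0 < e ->
  \forall t \near +oo, cle C (rescale f x t) (finfty f x + e *: x).
Proof.
move=> xC e0.
have small : (fun t => rescale f x t - finfty f x) @ +oo --> 0.
  by rewrite -(subrr (finfty f x)); apply: cvgB (rescale_cvg xC) (cvg_cst _).
have absorb := interior_absorbing coneC e0 xC.
near=> t.
have : cle C (rescale f x t - finfty f x) (e *: x).
  by near: t; exact: (small _ absorb).
by rewrite /cle opprB addrA [e *: x + _]addrC.
Unshelve. all: end_near. Qed.

Lemma rcone_le_finfty : interior C !=set0 -> rcone C f <= rcone C (finfty f).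
Proof.
move=> intC; apply: rcone_ge => // x xC.
apply: Mcone_ge; first exact: interior_dominates.
move=> b b0 finf_le_b; apply/ler_addgt0Pr => e e0.
have [t t0 ft] := pinfty_ex_gt0 (rescale_near_le xC e0).
apply: le_trans (rcone_le f (interiorZ coneC t0 xC)) _.
apply: Mcone_le; first exact: addr_gt0.
have : cle C (rescale f x t) ((b + e) *: x).
  apply: (cle_trans coneC ft).
  by rewrite /cle scalerDl opprD addrACA subrr addr0.
move=> /(cleZ coneC (ltW t0)); rewrite /rescale scalerA mulfV ?gt_eqF // scale1r.
by rewrite scalerA mulrC -scalerA.
Qed.

End Recession.

Theorem proposition4p9 (R : realType) (V : completeNormedModType R)
  (C : set V) (f : V -> V) :
  is_closed_cone C -> regular_cone C -> interior C !=set0 ->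
  (forall x, interior C x -> interior C (f x)) ->
  order_preserving_on C f -> subhomogeneous_on C f ->
  exists finf : V -> V,
    [/\ (forall x, interior C x ->
           (fun t : R => t^-1 *: f (t *: x)) @ +oo --> finf x),
        (forall x, interior C x -> C (finf x)),
        order_preserving_on C finf,
        homogeneous_on C finf &
        rcone C f = rcone C finf].
Proof.
move=> coneC regC intC f_int f_op f_subhom.
exists (finfty f); split.
- exact: rescale_cvg.
- exact: finfty_ge0.
- exact: finfty_op.
- exact: finfty_hom.
- apply/eqP; rewrite eq_le rcone_le_finfty //=.
  by apply: le_rcone => // x; apply: finfty_le.
Qed.
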